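(* For every BIMS channel with capacity $C$ and every $R\ge0$, the following hold (as inequalities in $[-\infty,+\infty]$): (a) Strong converse exponent: $E_{\rm sc}^{\rm bsc}(R;C)\le E_{\rm sc}(R)\le E_{\rm sc}^{\rm bec}(R;C)$. (b) Sphere-packing exponent: $E_{\rm sp}^{\rm bsc}(R;C)\le E_{\rm sp}(R)\le E_{\rm sp}^{\rm bec}(R;C)$. (c) Generalized Feinstein exponent: $E_{\rm gfb}^{\rm bsc}(R;C)\le E_{\rm gfb}(R)\le E_{\rm gfb}^{\rm bec}(R;C)$.
   Context: A BIMS (binary-input memoryless symmetric) channel is a memoryless channel with input alphabet $\{x_0,x_1\}$, finite output alphabet $\mathcal Y$ and transition probabilities $P_{Y|X}(y|x)$. It is symmetric in Gallager's sense: the columns of the $2\times|\mathcal Y|$ transition matrix (rows indexed by inputs) can be partitioned into submatrices such that, in each submatrix, every row is a permutation of every other row and every column is a permutation of every other column. Inputs are equiprobable and logarithms are base 2. The capacity $C$ is $I(X;Y)$ under equiprobable inputs. For $\rho>-1$, $$F(\rho)=\sum_{x}\tfrac12\sum_{y:\,P_{Y|X}(y|x)>0}P_{Y|X}(y|x)\left(\frac{\tfrac12\sum_{x'}P_{Y|X}(y|x')^{1/(1+\rho)}}{P_{Y|X}(y|x)^{1/(1+\rho)}}\right)^{\rho},$$ and $E_0(\rho)=-\log F(\rho)$. The exponents are $$E_{\rm sc}(R)=\sup_{-1<\rho\le0}\bigl(E_0(\rho)-\rho R\bigr),\qquad E_{\rm sp}(R)=\sup_{\rho>0}\bigl(E_0(\rho)-\rho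 R\bigr),\qquad E_{\rm gfb}(R)=\sup_{\rho\ge0}\frac{E_0(\rho)-\rho R}{1+\rho}.$$ The quantities with superscript bec (resp. bsc) are defined by the same formulas with $E_0(\rho)$ replaced by $-\log F^{\rm bec}(\rho;C)$ (resp. $-\log F^{\rm bsc}(\rho;C)$), where $$F^{\rm bec}(\rho;C)=1+(2^{-\rho}-1)C,$$ $$F^{\rm bsc}(\rho;C)=2^{-\rho}\bigl(\varepsilon^{1/(1+\rho)}+(1-\varepsilon)^{1/(1+\rho)}\bigr)^{1+\rho},\qquad \varepsilon=h^{-1}(1-C),$$ $h$ is the binary entropy function and $h^{-1}$ its inverse on $[0,\tfrac12]$. *)

From Stdlib Require Import Reals Lra List Permutation Classical ClassicalEpsilon.
Import ListNotations.
Open Scope R_scope.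

Definition log2 (x : R) : R := ln x / ln 2.

(** Real power with the convention 0^a = 0 (only used with a > 0). *)
Definition powr (x a : R) : R := if Rlt_dec 0 x then Rpower x a else 0.

Definition Rsum_list (l : list R) : R := fold_right Rplus 0 l.
Definition sumY (n : nat) (f : nat -> R) : R := Rsum_list (map f (seq 0 n)).
Definition sumX (f : bool -> R) : R := f false + f true.

(** A binary-input channel with finite output alphabet {0,...,n-1}:
    W x y = P_{Y|X}(y|x). *)
Definition is_channel (n : nat) (W : bool -> nat -> R) : Prop :=
  (forall x y, (y < n)%nat -> 0 <= W x y) /\
  (forall x, sumY n (W x) = 1).

(** Gallager symmetry: the columns are partitioned into blocks (block label
    blk y); in each block every row is a permutation of every other row and
    every column is a permutation of every other column. *)
Definition gallager_symmetric (n : nat) (W : bool -> nat -> R) : Prop :=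
  exists blk : nat -> nat, forall k : nat,
    let cols := filter (fun y => Nat.eqb (blk y) k) (seq 0 n) in
    Permutation (map (W false) cols) (map (W true) cols) /\
    (forall y y', In y cols -> In y' cols ->
       Permutation [W false y; W true y] [W false y'; W true y']).

Definition BIMS (n : nat) (W : bool -> nat -> R) : Prop :=
  is_channel n W /\ gallager_symmetric n W.

Definition PY (W : bool -> nat -> R) (y : nat) : R := / 2 * sumX (fun x => W x y).

(** Capacity = I(X;Y) under equiprobable inputs (0 log 0 = 0). *)
Definition capacity (n : nat) (W : bool -> nat -> R) : R :=
  sumX (fun x => / 2 * sumY n (fun y =>
    if Rlt_dec 0 (W x y) then W x y * log2 (W x y / PY W y) else 0)).

Definition Fch (n : nat) (W : bool -> nat -> R) (rho : R) : R :=
  sumX (fun x => / 2 * sumY n (fun y =>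
    if Rlt_dec 0 (W x y) then
      W x y * Rpower
        ((/ 2 * sumX (fun x' => powr (W x' y) (/ (1 + rho))))
           / powr (W x y) (/ (1 + rho))) rho
    else 0)).

Definition E0ch (n : nat) (W : bool -> nat -> R) (rho : R) : R :=
  - log2 (Fch n W rho).

Definition hb (p : R) : R :=
  - (if Rlt_dec 0 p then p * log2 p else 0)
  - (if Rlt_dec 0 (1 - p) then (1 - p) * log2 (1 - p) else 0).

Definition Fbec (rho C : R) : R := 1 + (Rpower 2 (- rho) - 1) * C.
Definition E0bec (C rho : R) : R := - log2 (Fbec rho C).

(** F^bsc with crossover probability eps (eps = h^{-1}(1-C)). *)
Definition Fbsc (rho eps : R) : R :=
  Rpower 2 (- rho) *
  Rpower (powr eps (/ (1 + rho)) + powr (1 - eps) (/ (1 + rho))) (1 + rho).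
Definition E0bsc (eps rho : R) : R := - log2 (Fbsc rho eps).

Inductive Rbar : Type := Fin (r : R) | PInf | MInf.

Definition Rbar_le (x y : Rbar) : Prop :=
  match x, y with
  | MInf, _ => True
  | _, PInf => True
  | Fin a, Fin b => a <= b
  | _, _ => False
  end.

Definition Rbar_sup (P : R -> Prop) : Rbar.
Proof.
  destruct (excluded_middle_informative (exists x, P x)) as [ne|_].
  - destruct (excluded_middle_informative (bound P)) as [b|_].
    + exact (Fin (proj1_sig (completeness P b ne))).
    + exact PInf.
  - exact MInf.
Defined.

Definition Esc (E0 : R -> R) (Rt : R) : Rbar :=
  Rbar_sup (fun v => exists rho, -1 < rho <= 0 /\ v = E0 rho - rho * Rt).
Definition Esp (E0 : R -> R) (Rt : R) : Rbar :=
  Rbar_sup (fun v => exists rho, 0 < rho /\ v = E0 rho - rho * Rt).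
Definition Egfb (E0 : R -> R) (Rt : R) : Rbar :=
  Rbar_sup (fun v => exists rho, 0 <= rho /\ v = (E0 rho - rho * Rt) / (1 + rho)).

(** Every output letter y of the channel is a "column"
    (W(0|y), W(1|y)), which behaves like a BSC with crossover
    δ_y = W(1|y) / (W(0|y) + W(1|y)); both F(ρ) and the capacity are
    P_Y-averages over these columns:
        F(ρ) = Σ_y P_Y(y) F^bsc(ρ; δ_y),    C = Σ_y P_Y(y) (1 - h(δ_y)).
    The analytic core is that, for fixed ρ > -1, F^bsc(ρ; δ) is a concave
    function of the entropy h(δ) on δ ∈ [0, 1/2].  In log-odds coordinates
    w = ln((1-δ)/δ) this is the monotonicity of the ratio of derivatives
    dF^bsc/dh, which reduces to one elementary exponential inequality.
    Concavity gives supporting lines, hence (i) F^bsc lies above its chord,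
    which averages to F^bec(ρ; C), and (ii) Jensen's inequality
    Σ_y P_Y(y) F^bsc(δ_y) <= F^bsc(ε) when h(ε) = 1 - C.  So
    F^bec(ρ;C) <= F(ρ) <= F^bsc(ρ;ε) for all ρ > -1; E0 = -log2 F reverses
    the order, and each exponent is a supremum that is monotone in E0. *)

From Stdlib Require Import Reals Lra Psatz List Lia ClassicalEpsilon.
From Coquelicot Require Coquelicot.
Open Scope R_scope.

Lemma ln_le_sub1 x : 0 < x -> ln x <= x - 1.
Proof. intros hx. pose proof (exp_ineq1_le (ln x)) as h. rewrite exp_ln in h; lra. Qed.

Lemma ln_lt_sub1 x : 0 < x -> x <> 1 -> ln x < x - 1.
Proof.
  intros hx h1. assert (hne : ln x <> 0) by (apply ln_neq_0; auto).
  pose proof (exp_ineq1 (ln x) hne) as h. rewrite exp_ln in h; lra.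
Qed.

Lemma ln_nonneg x : 1 <= x -> 0 <= ln x.
Proof. intros hx. rewrite <- ln_1. apply Rcomplements.ln_le; lra. Qed.

Lemma Rpower_pos x y : 0 < Rpower x y.
Proof. apply exp_pos. Qed.

Module LogOdds.
Import Coquelicot.Coquelicot.

Lemma exp_le_mono x y : x <= y -> exp x <= exp y.
Proof. intros [h|<-]; [left; apply exp_increasing|]; lra. Qed.

Lemma nondecreasing_of_deriv (f df : R -> R) a b : a <= b ->
  (forall x, a <= x <= b -> is_derive f x (df x)) ->
  (forall x, a <= x <= b -> 0 <= df x) -> f a <= f b.
Proof.
  intros hab hd hp.
  destruct (MVT_gen f a b df) as [c [hc e]];
    rewrite ?Rmin_left, ?Rmax_right in * by lra.
  - intros x hx. apply hd. lra.
  - intros x hx. apply continuity_pt_filterlim.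
    apply (ex_derive_continuous (V:=R_NormedModule)). exists (df x). apply hd; lra.
  - assert (0 <= df c) by (apply hp; lra). nra.
Qed.

Lemma exp_ineq_L y : 0 <= y -> 0 <= y * (exp y + 1) - 2 * (exp y - 1).
Proof.
  intros hy.
  assert (h := nondecreasing_of_deriv (fun y => y * (exp y + 1) - 2 * (exp y - 1))
     (fun y => exp y * (exp (-y) - 1 + y)) 0 y hy).
  cbv beta in h. rewrite exp_0 in h. apply (Rle_trans _ (0 * (1 + 1) - 2 * (1 - 1))); [lra|].
  apply h.
  - intros x _. auto_derive; auto. rewrite exp_Ropp. field. apply Rgt_not_eq, exp_pos.
  - intros x _. apply Rmult_le_pos; [left; apply exp_pos|].
    pose proof (exp_ineq1_le (-x)). lra.
Qed.

Lemma exp_ineq_M y : 0 <= y -> 0 <= exp y * exp y - 1 - 2 * y * exp y.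
Proof.
  intros hy.
  assert (h := nondecreasing_of_deriv (fun y => exp y * exp y - 1 - 2 * y * exp y)
     (fun y => 2 * exp y * (exp y - 1 - y)) 0 y hy).
  cbv beta in h. rewrite exp_0 in h. apply (Rle_trans _ (1 * 1 - 1 - 2 * 0 * 1)); [lra|].
  apply h.
  - intros x _. auto_derive; auto. ring.
  - intros x _. pose proof (exp_ineq1_le x). pose proof (exp_pos x). nra.
Qed.

(** It is the sign of the derivative of the slope ratio below; the cases
    q < 0 and q > 0 reduce to [exp_ineq_M] and [exp_ineq_L]. *)
Lemma exp_ineq_key s q w : s + q = 1 -> 0 < s -> 0 <= w ->
  0 <= q * w * (exp (s*w) + exp (-q*w)) - (1 + exp (s*w)) * (1 - exp (-q*w)).
Proof.
  intros hsq hs hw.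
  destruct (Rtotal_order q 0) as [hq|[->|hq]].
  - set (y := -q*w). assert (hy : 0 <= y) by (unfold y; nra).
    assert (hE : exp (s*w) = exp w * exp y).
    { rewrite <- exp_plus. f_equal. unfold y. replace s with (1-q) by lra. ring. }
    assert (h1 : 1 <= exp w) by (rewrite <- exp_0; apply exp_le_mono; lra).
    pose proof (exp_ineq_M y hy). pose proof (exp_ineq1_le y). pose proof (exp_pos y).
    assert (0 <= (exp w - 1) * (exp y * (exp y - 1 - y))).
    { apply Rmult_le_pos; [lra|apply Rmult_le_pos; lra]. }
    replace (q*w) with (-y) by (unfold y; ring). rewrite hE. fold y. nra.
  - replace (-0*w) with 0 by ring. rewrite exp_0. lra.
  - set (y := q*w). assert (hy : 0 <= y) by (unfold y; nra).
    assert (hY : exp (-q*w) * exp y = 1).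
    { unfold y. rewrite <- exp_plus, <- exp_0. f_equal. ring. }
    assert (h1 : 1 <= exp (s*w)) by (rewrite <- exp_0; apply exp_le_mono; nra).
    pose proof (exp_ineq_L y hy). pose proof (exp_pos y). pose proof (exp_pos (-q*w)).
    pose proof (exp_ineq1_le y).
    set (E := exp (s*w)) in *. set (Eq := exp (-q*w)) in *. set (Y := exp y) in *.
    fold y.
    assert (0 <= y * E * Y + y - (1+E)*(Y-1)).
    { replace (y * E * Y + y - (1+E)*(Y-1))
        with ((1+E)/2 * (y*(Y+1) - 2*(Y-1)) + y*(Y-1)*(E-1)/2) by field.
      apply Rplus_le_le_0_compat; [apply Rmult_le_pos; lra|].
      apply Rmult_le_pos; [|lra]. apply Rmult_le_pos; [|lra]. apply Rmult_le_pos; lra. }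
    replace (y * (E + Eq) - (1 + E) * (1 - Eq))
      with (Eq * (y * E * Y + y - (1+E)*(Y-1))).
    + apply Rmult_le_pos; lra.
    + replace (Eq * (y * E * Y + y - (1+E)*(Y-1)))
        with (y*E*(Eq*Y) + y*Eq - (1+E)*(Eq*Y - Eq)) by ring.
      rewrite hY. ring.
Qed.

(** A BSC with crossover δ ∈ (0,1/2] is described by
    w = ln((1-δ)/δ) ∈ [0,+oo), and for ρ > -1 we write s = 1/(1+ρ).
    Then [Phi ρ w] = 2^ρ F^bsc(ρ;δ) and [Psi w] = ln 2 · h(δ). *)
Definition expo (r : R) : R := / (1 + r).
Definition Lf (r w : R) : R := ln (1 + exp (expo r * w)).
Definition Phi (r w : R) : R := exp ((1 + r) * Lf r w) / (1 + exp w).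
Definition Psi (w : R) : R := ln (1 + exp w) - w * exp w / (1 + exp w).

Definition dPhi (r w : R) : R :=
  exp (r * Lf r w) * (exp (expo r * w) - exp w) / (1 + exp w) ^ 2.
Definition dPsi (w : R) : R := - (w * exp w) / (1 + exp w) ^ 2.

(** The ratio dPhi/dPsi for w > 0, i.e. the slope of F^bsc as a function of
    the entropy, and its derivative. *)
Definition slope (r w : R) : R :=
  exp (r * Lf r w) * (1 - exp (-(1 - expo r) * w)) / w.
Definition dslope (r w : R) : R :=
  exp (r * Lf r w) / (1 + exp (expo r * w)) *
  ((1 - expo r) * w * (exp (expo r * w) + exp (-(1 - expo r) * w))
   - (1 + exp (expo r * w)) * (1 - exp (-(1 - expo r) * w))) / w ^ 2.

Lemma expo_pos r : -1 < r -> 0 < expo r.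
Proof. intros; apply Rinv_0_lt_compat; lra. Qed.

Lemma exp_Lf r w : exp (Lf r w) = 1 + exp (expo r * w).
Proof. apply exp_ln. pose proof (exp_pos (expo r * w)). lra. Qed.

Lemma is_derive_Psi w : is_derive Psi w (dPsi w).
Proof. unfold Psi, dPsi. pose proof (exp_pos w). auto_derive; [lra|field; lra]. Qed.

Lemma is_derive_Phi r w : -1 < r -> is_derive (Phi r) w (dPhi r w).
Proof.
  intros hr. unfold Phi, dPhi. pose proof (exp_pos w). pose proof (exp_pos (expo r * w)).
  unfold Lf. auto_derive; [repeat split; lra|].
  fold (Lf r w).
  replace (exp ((1 + r) * Lf r w)) with (exp (r * Lf r w) * (1 + exp (expo r * w)))
    by (rewrite <- exp_Lf, <- exp_plus; f_equal; ring).
  unfold expo in *. field. lra.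
Qed.

Lemma is_derive_slope r w : -1 < r -> 0 < w -> is_derive (slope r) w (dslope r w).
Proof.
  intros hr hw. unfold slope, dslope. pose proof (exp_pos w).
  pose proof (exp_pos (expo r * w)). pose proof (exp_pos (-(1 - expo r) * w)).
  unfold Lf. auto_derive; [repeat split; lra|].
  fold (Lf r w). unfold expo in *. field. split; lra.
Qed.

(** The slope is nondecreasing in w: this is the concavity of F^bsc in the
    entropy, and comes from [exp_ineq_key] with s = expo r, q = 1 - s. *)
Lemma slope_nondecreasing r a b : -1 < r -> 0 < a -> a <= b -> slope r a <= slope r b.
Proof.
  intros hr ha hab. apply (nondecreasing_of_deriv (slope r) (dslope r)); auto.
  - intros x hx. apply is_derive_slope; lra.
  - intros x hx. unfold dslope.
    pose proof (exp_ineq_key (expo r) (1 - expo r) x ltac:(ring) (expo_pos r hr) ltac:(lra)).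
    pose proof (exp_pos (expo r * x)). pose proof (exp_pos (r * Lf r x)).
    unfold Rdiv. apply Rmult_le_pos; [apply Rmult_le_pos; [apply Rmult_le_pos|]|].
    + lra.
    + left; apply Rinv_0_lt_compat; lra.
    + lra.
    + left; apply Rinv_0_lt_compat; nra.
Qed.

Lemma dPhi_slope r w : -1 < r -> 0 < w -> dPhi r w = slope r w * dPsi w.
Proof.
  intros hr hw. unfold dPhi, slope, dPsi.
  assert (e : exp (-(1 - expo r) * w) * exp w = exp (expo r * w)).
  { rewrite <- exp_plus. f_equal. ring. }
  pose proof (exp_pos w). rewrite <- e. field. split; lra.
Qed.

Lemma dPsi_nonpos w : 0 <= w -> dPsi w <= 0.
Proof.
  intros hw. unfold dPsi. pose proof (exp_pos w).
  assert (0 <= w * exp w / (1 + exp w) ^ 2).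
  { apply Rmult_le_pos; [nra|left; apply Rinv_0_lt_compat; nra]. }
  unfold Rdiv in *. lra.
Qed.

(** The gap between [Phi] and the line of slope l in the (Psi, Phi) plane. *)
Definition gap (r l w : R) : R := Phi r w - l * Psi w.

Lemma is_derive_gap r l w : -1 < r -> is_derive (gap r l) w (dPhi r w - l * dPsi w).
Proof.
  intros hr. apply (is_derive_minus (Phi r) (fun x => l * Psi x)).
  - apply is_derive_Phi; auto.
  - apply (is_derive_scal Psi). apply is_derive_Psi.
Qed.

(** Supporting line: the gap for slope [slope r ws] is maximal at ws, since its
    derivative (slope r w - slope r ws) dPsi w changes sign only at ws. *)
Lemma gap_max r ws w : -1 < r -> 0 < ws -> 0 <= w ->
  gap r (slope r ws) w <= gap r (slope r ws) ws.
Proof.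
  intros hr hws hw. set (l := slope r ws).
  destruct (Rle_dec w ws) as [h|h].
  - apply (nondecreasing_of_deriv (gap r l) (fun x => dPhi r x - l * dPsi x)); auto.
    + intros x hx. apply is_derive_gap; auto.
    + intros x hx. destruct (Req_dec x 0) as [->|e].
      * unfold dPhi, dPsi. rewrite Rmult_0_l, Rmult_0_r, exp_0. lra.
      * rewrite dPhi_slope by lra. pose proof (dPsi_nonpos x ltac:(lra)).
        assert (slope r x <= l) by (apply slope_nondecreasing; lra). nra.
  - assert (- gap r l ws <= - gap r l w); [|lra].
    apply (nondecreasing_of_deriv (fun x => - gap r l x) (fun x => - (dPhi r x - l * dPsi x)));
      [lra| |].
    + intros x hx. apply (is_derive_opp (gap r l)). apply is_derive_gap; auto.
    + intros x hx. rewrite dPhi_slope by lra. pose proof (dPsi_nonpos x ltac:(lra)).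
      assert (l <= slope r x) by (apply slope_nondecreasing; lra). nra.
Qed.

(** Bounds describing the behaviour as w -> +oo (i.e. δ -> 0):
    [Phi] stays above e^w/(1+e^w) -> 1 and [Psi] decays like w e^(-w). *)
Lemma Phi_lower r w : -1 < r -> exp w / (1 + exp w) <= Phi r w.
Proof.
  intros hr. unfold Phi. pose proof (exp_pos w).
  apply Rmult_le_compat_r; [left; apply Rinv_0_lt_compat; lra|].
  apply exp_le_mono.
  assert (expo r * w <= Lf r w).
  { unfold Lf. rewrite <- (ln_exp (expo r * w)) at 1.
    pose proof (exp_pos (expo r * w)). left; apply ln_increasing; lra. }
  replace w with ((1 + r) * (expo r * w)) at 1 by (unfold expo; field; lra).
  apply Rmult_le_compat_l; lra.
Qed.

Lemma Psi_bounds w : 0 <= w -> 0 <= Psi w <= (1 + w) / exp w.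
Proof.
  intros hw. pose proof (exp_pos w). pose proof (Rinv_0_lt_compat _ H).
  assert (e : Psi w = ln (1 + / exp w) + w / (1 + exp w)).
  { unfold Psi. replace (1 + exp w) with (exp w * (1 + / exp w)) at 1 by (field; lra).
    rewrite ln_mult, ln_exp by lra. field. lra. }
  rewrite e.
  pose proof (ln_le_sub1 (1 + / exp w) ltac:(lra)).
  pose proof (ln_nonneg (1 + / exp w) ltac:(lra)).
  assert (0 <= w / (1 + exp w) <= w / exp w).
  { split; [apply Rmult_le_pos; [lra|left; apply Rinv_0_lt_compat; lra]|].
    apply Rmult_le_compat_l; [lra|apply Rinv_le_contravar; lra]. }
  replace ((1 + w) / exp w) with (/ exp w + w / exp w) by (field; lra). lra.
Qed.

Lemma sq_le_exp w : 0 <= w -> w * w <= 4 * exp w.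
Proof.
  intros hw. replace w with (w/2 + w/2) at 3 by field. rewrite exp_plus.
  pose proof (exp_ineq1_le (w/2)). nra.
Qed.

Lemma gap_lower r l w : -1 < r -> 1 <= w -> 1 - (1 + 5 * Rabs l) / w <= gap r l w.
Proof.
  intros hr hw. unfold gap.
  pose proof (Phi_lower r w hr). pose proof (Psi_bounds w ltac:(lra)).
  pose proof (sq_le_exp w ltac:(lra)). pose proof (exp_ineq1_le w). pose proof (exp_pos w).
  pose proof (Rabs_pos l).
  assert (l * Psi w <= Rabs l * ((1 + w) / exp w)).
  { apply Rle_trans with (Rabs l * Psi w).
    - destruct (Rle_dec 0 l); [rewrite Rabs_right|rewrite Rabs_left]; nra.
    - apply Rmult_le_compat_l; lra. }
  set (a := Rabs l) in *. set (X := exp w) in *.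
  assert (1 - / X <= X / (1 + X)).
  { replace (X / (1 + X)) with (1 - / (1 + X)) by (field; lra).
    apply Rplus_le_compat_l, Ropp_le_contravar, Rinv_le_contravar; lra. }
  assert (/ X + a * ((1 + w) / X) <= (1 + 5 * a) / w); [|lra].
  replace (/ X + a * ((1 + w) / X)) with ((w + a * w + a * w * w) / (w * X)) by (field; lra).
  replace ((1 + 5 * a) / w) with ((1 + 5 * a) * X / (w * X)) by (field; lra).
  apply Rmult_le_compat_r; [left; apply Rinv_0_lt_compat; nra|nra].
Qed.

(** Hence a gap that is maximal at ws is at least its limit 1 at +oo;
    this is the supporting-line property at the endpoint δ = 0. *)
Lemma gap_max_ge1 r l ws : -1 < r ->
  (forall w, ws <= w -> gap r l w <= gap r l ws) -> 1 <= gap r l ws.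
Proof.
  intros hr H.
  destruct (Rle_lt_dec 1 (gap r l ws)) as [h|h]; auto. exfalso.
  set (eps := 1 - gap r l ws). set (K := 1 + 5 * Rabs l).
  assert (heps : 0 < eps) by (unfold eps; lra).
  assert (hK : 0 < 2 * K / eps).
  { pose proof (Rabs_pos l). apply Rdiv_lt_0_compat; unfold K; lra. }
  set (w := Rmax ws 1 + 2 * K / eps).
  pose proof (Rmax_l ws 1). pose proof (Rmax_r ws 1).
  pose proof (H w ltac:(unfold w; lra)).
  pose proof (gap_lower r l w hr ltac:(unfold w; lra)). fold K in H3.
  assert (K / w <= eps / 2); [|unfold eps in *; lra].
  apply Rmult_le_reg_r with (2 * w / eps); [apply Rdiv_lt_0_compat; unfold w; lra|].
  replace (K / w * (2 * w / eps)) with (2 * K / eps) by (field; unfold w; lra).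
  replace (eps / 2 * (2 * w / eps)) with w by (field; lra). unfold w; lra.
Qed.
End LogOdds.
Import LogOdds.

Lemma ln2_pos : 0 < ln 2.
Proof. pose proof ln_lt_2. lra. Qed.

Lemma hb_formula d : 0 < d < 1 -> hb d = (- (d * ln d) - (1 - d) * ln (1 - d)) / ln 2.
Proof.
  intros hd. unfold hb, log2.
  destruct (Rlt_dec 0 d); [|lra]. destruct (Rlt_dec 0 (1 - d)); [|lra].
  pose proof ln2_pos. field. lra.
Qed.

Lemma hb_sym d : hb (1 - d) = hb d.
Proof. unfold hb. replace (1 - (1 - d)) with d by ring. ring. Qed.

Lemma hb_0 : hb 0 = 0.
Proof.
  unfold hb. destruct (Rlt_dec 0 0); [lra|].
  destruct (Rlt_dec 0 (1 - 0)); [|lra]. replace (1 - 0) with 1 by ring.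
  unfold log2. rewrite ln_1. field. pose proof ln2_pos; lra.
Qed.

Lemma hb_half : hb (/2) = 1.
Proof.
  unfold hb. destruct (Rlt_dec 0 (/2)); [|lra].
  destruct (Rlt_dec 0 (1 - /2)); [|lra]. replace (1 - /2) with (/2) by field.
  unfold log2. rewrite ln_Rinv by lra. field. pose proof ln2_pos; lra.
Qed.

Lemma hb_pos d : 0 < d < 1 -> 0 < hb d.
Proof.
  intros hd. rewrite hb_formula by lra. apply Rdiv_lt_0_compat; [|apply ln2_pos].
  assert (ln d < 0) by (rewrite <- ln_1; apply ln_increasing; lra).
  assert (ln (1 - d) < 0) by (rewrite <- ln_1; apply ln_increasing; lra).
  nra.
Qed.

(** h(d) < 1 below 1/2, by ln x <= x - 1 (strict at x = 1/(2d) <> 1) applied to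
    (1 - h(d)) ln 2 = d ln(2d) + (1-d) ln(2(1-d)). *)
Lemma hb_lt1 d : 0 <= d < /2 -> hb d < 1.
Proof.
  intros hd. pose proof ln2_pos.
  destruct (Req_dec d 0) as [->|e]; [rewrite hb_0; lra|].
  rewrite hb_formula by lra.
  apply Rmult_lt_reg_r with (ln 2); auto. unfold Rdiv. rewrite Rmult_assoc, Rinv_l by lra.
  replace (- (d * ln d) - (1 - d) * ln (1 - d))
    with (ln 2 + d * ln (/ (2 * d)) + (1 - d) * ln (/ (2 * (1 - d))))
    by (rewrite !ln_Rinv, !ln_mult by lra; ring).
  assert (/ (2 * d) <> 1).
  { intro h. assert (2 * d = 1) by (rewrite <- (Rinv_inv (2 * d)), h; apply Rinv_1). lra. }
  pose proof (ln_lt_sub1 (/ (2 * d)) ltac:(apply Rinv_0_lt_compat; lra) H0).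
  pose proof (ln_le_sub1 (/ (2 * (1 - d))) ltac:(apply Rinv_0_lt_compat; lra)).
  assert (A1 : d * ln (/ (2 * d)) < d * (/ (2 * d) - 1)) by (apply Rmult_lt_compat_l; lra).
  assert (A2 : (1 - d) * ln (/ (2 * (1 - d))) <= (1 - d) * (/ (2 * (1 - d)) - 1))
    by (apply Rmult_le_compat_l; lra).
  replace (d * (/ (2 * d) - 1)) with (/2 - d) in A1 by (field; lra).
  replace ((1 - d) * (/ (2 * (1 - d)) - 1)) with (/2 - (1 - d)) in A2 by (field; lra).
  lra.
Qed.

Lemma hb_range d : 0 <= d <= /2 -> 0 <= hb d <= 1.
Proof.
  intros hd.
  destruct (Req_dec d 0) as [->|e0]; [rewrite hb_0; lra|].
  destruct (Req_dec d (/2)) as [->|e1]; [rewrite hb_half; lra|].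
  pose proof (hb_pos d ltac:(lra)). pose proof (hb_lt1 d ltac:(lra)). lra.
Qed.

Lemma Fbsc_sym r d : Fbsc r (1 - d) = Fbsc r d.
Proof.
  unfold Fbsc. replace (1 - (1 - d)) with d by ring.
  rewrite (Rplus_comm (powr d _)). reflexivity.
Qed.

Lemma Fbsc_0 r : Fbsc r 0 = Rpower 2 (- r).
Proof.
  assert (one : forall x, Rpower 1 x = 1) by (intros; unfold Rpower; rewrite ln_1, Rmult_0_r; apply exp_0).
  unfold Fbsc, powr. destruct (Rlt_dec 0 0); [lra|].
  destruct (Rlt_dec 0 (1 - 0)); [|lra].
  replace (1 - 0) with 1 by ring. rewrite !one, Rplus_0_l, one. ring.
Qed.

Lemma Fbsc_half r : -1 < r -> Fbsc r (/2) = 1.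
Proof.
  intros hr. unfold Fbsc, powr. destruct (Rlt_dec 0 (/2)); [|lra].
  destruct (Rlt_dec 0 (1 - /2)); [|lra]. replace (1 - /2) with (/2) by field.
  unfold Rpower. rewrite <- exp_plus.
  replace (exp (/ (1 + r) * ln (/ 2)) + exp (/ (1 + r) * ln (/ 2)))
    with (exp (ln 2 + / (1 + r) * ln (/ 2))) by (rewrite exp_plus, exp_ln by lra; ring).
  rewrite ln_exp, ln_Rinv by lra.
  replace (- r * ln 2 + (1 + r) * (ln 2 + / (1 + r) * - ln 2)) with 0 by (field; lra).
  apply exp_0.
Qed.

Definition logodds (d : R) : R := ln ((1 - d) / d).

Lemma logodds_nonneg d : 0 < d <= /2 -> 0 <= logodds d.
Proof.
  intros hd. apply ln_nonneg.
  apply Rmult_le_reg_r with d; [lra|].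
  unfold Rdiv. rewrite Rmult_assoc, Rinv_l by lra. lra.
Qed.

Lemma logodds_pos d : 0 < d < /2 -> 0 < logodds d.
Proof.
  intros hd. unfold logodds. rewrite <- ln_1. apply ln_increasing; [lra|].
  apply Rmult_lt_reg_r with d; [lra|].
  unfold Rdiv. rewrite Rmult_assoc, Rinv_l by lra. lra.
Qed.

Lemma Fbsc_Phi r d : -1 < r -> 0 < d < 1 -> Fbsc r d = Rpower 2 (- r) * Phi r (logodds d).
Proof.
  intros hr hd. unfold Fbsc, Phi, Lf, expo, logodds, powr.
  destruct (Rlt_dec 0 d) as [_|c]; [|lra].
  destruct (Rlt_dec 0 (1 - d)) as [_|c]; [|lra].
  f_equal.
  rewrite exp_ln by (apply Rdiv_lt_0_compat; lra).
  set (s := / (1 + r)).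
  assert (e : exp (s * ln ((1 - d) / d)) = Rpower (1 - d) s / Rpower d s).
  { unfold Rpower. rewrite Rcomplements.ln_div by lra.
    replace (s * (ln (1 - d) - ln d)) with (s * ln (1 - d) + - (s * ln d)) by ring.
    rewrite exp_plus, exp_Ropp. reflexivity. }
  rewrite e.
  pose proof (Rpower_pos d s). pose proof (Rpower_pos (1 - d) s).
  replace (1 + Rpower (1 - d) s / Rpower d s)
    with ((Rpower d s + Rpower (1 - d) s) / Rpower d s) by (field; lra).
  rewrite Rcomplements.ln_div, ln_Rpower by lra.
  replace ((1 + r) * (ln (Rpower d s + Rpower (1 - d) s) - s * ln d))
    with ((1 + r) * ln (Rpower d s + Rpower (1 - d) s) + - ln d) by (unfold s; field; lra).
  rewrite exp_plus, exp_Ropp, exp_ln by lra.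
  unfold Rpower at 1. field. lra.
Qed.

Lemma hb_Psi d : 0 < d < 1 -> hb d = Psi (logodds d) / ln 2.
Proof.
  intros hd. unfold hb, Psi, logodds, log2.
  destruct (Rlt_dec 0 d) as [_|c]; [|lra].
  destruct (Rlt_dec 0 (1 - d)) as [_|c]; [|lra].
  rewrite exp_ln by (apply Rdiv_lt_0_compat; lra).
  replace (1 + (1 - d) / d) with (/ d) by (field; lra).
  rewrite ln_Rinv, Rcomplements.ln_div by lra.
  pose proof ln2_pos. field. split; lra.
Qed.

(** Concavity of F^bsc in the entropy, in the form of supporting lines: at every
    interior crossover ds there is a slope lam with
    F^bsc(d) <= F^bsc(ds) + lam (h(d) - h(ds)) on [0,1/2]. *)
Lemma Fbsc_supporting_line r ds : -1 < r -> 0 < ds < /2 ->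
  exists lam, forall d, 0 <= d <= /2 -> Fbsc r d <= Fbsc r ds + lam * (hb d - hb ds).
Proof.
  intros hr hds.
  set (ws := logodds ds). pose proof (logodds_pos ds hds) as hws. fold ws in hws.
  set (l := slope r ws). set (c := Rpower 2 (- r)).
  assert (hc : 0 < c) by apply Rpower_pos. pose proof ln2_pos.
  exists (c * l * ln 2). intros d hd.
  rewrite (Fbsc_Phi r ds), (hb_Psi ds) by lra. fold ws c.
  replace (c * Phi r ws + c * l * ln 2 * (hb d - Psi ws / ln 2))
    with (c * gap r l ws + c * l * ln 2 * hb d) by (unfold gap; field; lra).
  destruct (Req_dec d 0) as [->|e].
  - rewrite Fbsc_0, hb_0. fold c.
    assert (1 <= gap r l ws).
    { apply gap_max_ge1; auto. intros w hw. apply gap_max; lra. }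
    nra.
  - rewrite (Fbsc_Phi r d), (hb_Psi d) by lra. fold c.
    pose proof (gap_max r ws (logodds d) hr hws (logodds_nonneg d ltac:(lra))).
    fold l in H0. unfold gap in *.
    replace (c * l * ln 2 * (Psi (logodds d) / ln 2)) with (c * (l * Psi (logodds d)))
      by (field; lra).
    nra.
Qed.

(** Comparing with the supporting lines through the endpoints h = 0 and h = 1:
    F^bsc lies above its chord, which is F^bec. *)
Lemma Fbsc_above_chord r d : -1 < r -> 0 <= d <= /2 ->
  Rpower 2 (- r) * (1 - hb d) + hb d <= Fbsc r d.
Proof.
  intros hr hd.
  destruct (Req_dec d 0) as [->|e0]; [rewrite hb_0, Fbsc_0; lra|].
  destruct (Req_dec d (/2)) as [->|e1]; [rewrite hb_half, Fbsc_half; lra|].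
  destruct (Fbsc_supporting_line r d hr ltac:(lra)) as [lam H].
  pose proof (H 0 ltac:(lra)) as H0. pose proof (H (/2) ltac:(lra)) as H1.
  rewrite Fbsc_0, hb_0 in H0. rewrite Fbsc_half, hb_half in H1 by auto.
  pose proof (hb_range d ltac:(lra)). set (t := hb d) in *.
  assert (0 <= (1 - t) * (Fbsc r d - lam * t - Rpower 2 (- r))) by (apply Rmult_le_pos; lra).
  assert (0 <= t * (Fbsc r d + lam * (1 - t) - 1)) by (apply Rmult_le_pos; lra).
  nra.
Qed.

Definition ssum (l : list nat) (f : nat -> R) : R := Rsum_list (map f l).

Lemma ssum_plus l f g : ssum l (fun y => f y + g y) = ssum l f + ssum l g.
Proof. induction l as [|a l IH]; unfold ssum in *; simpl; [ring|]. rewrite IH. ring. Qed.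

Lemma ssum_scal l c f : ssum l (fun y => c * f y) = c * ssum l f.
Proof. induction l as [|a l IH]; unfold ssum in *; simpl; [ring|]. rewrite IH. ring. Qed.

Lemma ssum_ext l f g : (forall y, In y l -> f y = g y) -> ssum l f = ssum l g.
Proof.
  induction l as [|a l IH]; intros H; unfold ssum in *; simpl; auto.
  rewrite (H a (or_introl eq_refl)), IH; auto.
  intros y hy. apply H. right; auto.
Qed.

Lemma ssum_le l f g : (forall y, In y l -> f y <= g y) -> ssum l f <= ssum l g.
Proof.
  induction l as [|a l IH]; intros H; unfold ssum in *; simpl; [lra|].
  pose proof (H a (or_introl eq_refl)). pose proof (IH (fun y hy => H y (or_intror hy))). lra.
Qed.

Lemma ssum_nonneg l f : (forall y, In y l -> 0 <= f y) -> 0 <= ssum l f.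
Proof.
  induction l as [|a l IH]; intros H; unfold ssum in *; simpl; [lra|].
  pose proof (H a (or_introl eq_refl)). pose proof (IH (fun y hy => H y (or_intror hy))). lra.
Qed.

Lemma ssum_zero l f : (forall y, In y l -> 0 <= f y) -> ssum l f = 0 ->
  forall y, In y l -> f y = 0.
Proof.
  induction l as [|a l IH]; intros H e y hy; [contradiction|].
  unfold ssum in e; simpl in e. fold (ssum l f) in e.
  pose proof (H a (or_introl eq_refl)).
  pose proof (ssum_nonneg l f (fun y hy => H y (or_intror hy))).
  destruct hy as [<-|hy]; [lra|].
  apply IH; auto; [intros; apply H; right; auto|lra].
Qed.

Section Mixture.
Variables (l : list nat) (p d : nat -> R).
Hypothesis p_nonneg : forall y, In y l -> 0 <= p y.
Hypothesis p_sum : ssum l p = 1.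
Hypothesis d_range : forall y, In y l -> 0 <= d y <= /2.

Lemma average_const c : ssum l (fun y => p y * c) = c.
Proof.
  rewrite (ssum_ext l _ (fun y => c * p y)) by (intros; ring).
  rewrite ssum_scal, p_sum. ring.
Qed.

Lemma average_le (f : nat -> R) c :
  (forall y, In y l -> p y = 0 \/ f y <= c) -> ssum l (fun y => p y * f y) <= c.
Proof.
  intros H. apply Rle_trans with (ssum l (fun y => p y * c)); [|rewrite average_const; lra]. apply ssum_le. intros y hy.
  destruct (H y hy) as [->|h]; [lra|]. apply Rmult_le_compat_l; auto.
Qed.

Lemma average_zero (g : nat -> R) :
  (forall y, In y l -> 0 <= g y) -> ssum l (fun y => p y * g y) = 0 ->
  forall y, In y l -> p y = 0 \/ g y = 0.
Proof.
  intros hg e y hy. apply Rmult_integral.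
  apply (ssum_zero l (fun y => p y * g y)); auto.
  intros z hz. apply Rmult_le_pos; auto.
Qed.

Lemma average_Fbsc_ge_Fbec r : -1 < r ->
  Fbec r (ssum l (fun y => p y * (1 - hb (d y)))) <= ssum l (fun y => p y * Fbsc r (d y)).
Proof.
  intros hr. unfold Fbec.
  replace (1 + (Rpower 2 (- r) - 1) * ssum l (fun y => p y * (1 - hb (d y))))
    with (ssum l (fun y => p y * (Rpower 2 (- r) * (1 - hb (d y)) + hb (d y)))).
  - apply ssum_le. intros y hy. apply Rmult_le_compat_l; auto.
    apply Fbsc_above_chord; auto.
  - rewrite (ssum_ext l _ (fun y => p y + (Rpower 2 (- r) - 1) * (p y * (1 - hb (d y)))))
      by (intros; ring).
    rewrite ssum_plus, ssum_scal, p_sum. reflexivity.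
Qed.

(** In the interior this is the
    supporting line at eps; at eps = 0 (resp. 1/2) all weight sits on
    d = 0 (resp. d = 1/2). *)
Lemma average_Fbsc_le_Fbsc r eps : -1 < r -> 0 <= eps <= /2 ->
  hb eps = ssum l (fun y => p y * hb (d y)) ->
  ssum l (fun y => p y * Fbsc r (d y)) <= Fbsc r eps.
Proof.
  intros hr he hh.
  destruct (Req_dec eps 0) as [->|e0].
  { rewrite hb_0 in hh. apply average_le. intros y hy.
    destruct (average_zero (fun y => hb (d y))) with (y := y) as [h|h]; auto.
    - intros z hz. apply hb_range; auto.
    - right. destruct (Req_dec (d y) 0) as [->|ne]; [lra|].
      pose proof (d_range y hy). pose proof (hb_pos (d y) ltac:(lra)). lra. }
  destruct (Req_dec eps (/2)) as [->|e1].
  { rewrite hb_half in hh. apply average_le. intros y hy.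
    destruct (average_zero (fun y => 1 - hb (d y))) with (y := y) as [h|h]; auto.
    - intros z hz. pose proof (hb_range (d z) (d_range z hz)). lra.
    - rewrite (ssum_ext l _ (fun y => p y + (-1) * (p y * hb (d y)))) by (intros; ring).
      rewrite ssum_plus, ssum_scal, p_sum. lra.
    - right. destruct (Req_dec (d y) (/2)) as [->|ne]; [lra|].
      pose proof (d_range y hy). pose proof (hb_lt1 (d y) ltac:(lra)). lra. }
  destruct (Fbsc_supporting_line r eps hr ltac:(lra)) as [lam H].
  apply Rle_trans with (ssum l (fun y => p y * (Fbsc r eps + lam * (hb (d y) - hb eps)))).
  - apply ssum_le. intros y hy. apply Rmult_le_compat_l; auto.
  - rewrite (ssum_ext l _ (fun y => p y * (Fbsc r eps - lam * hb eps) + lam * (p y * hb (d y))))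
      by (intros; ring).
    rewrite ssum_plus, ssum_scal, average_const, <- hh. lra.
Qed.

End Mixture.

(** Column decomposition.  Output letter y carries probability P_Y(y) and
    defines a BSC with crossover W(1|y)/(W(0|y)+W(1|y)). *)
Definition crossover (W : bool -> nat -> R) (y : nat) : R :=
  W true y / (W false y + W true y).

Lemma powr_nonneg z s : 0 <= powr z s.
Proof. unfold powr. destruct (Rlt_dec 0 z); [left; apply Rpower_pos|lra]. Qed.

Lemma powr_scale u z s : 0 < u -> 0 <= z -> powr z s = Rpower u s * powr (z / u) s.
Proof.
  intros hu hz. unfold powr.
  destruct (Rlt_dec 0 z) as [h|h]; destruct (Rlt_dec 0 (z / u)) as [h'|h'].
  - rewrite Rpower_mult_distr by auto. f_equal. field. lra.
  - exfalso. apply h'. apply Rdiv_lt_0_compat; auto.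
  - exfalso. replace z with 0 in h' by lra. unfold Rdiv in h'. lra.
  - ring.
Qed.


Definition Fch_summand (r a b x : R) : R :=
  if Rlt_dec 0 x then
    x * Rpower ((/2 * (powr a (/(1+r)) + powr b (/(1+r)))) / powr x (/(1+r))) r
  else 0.

Definition cap_summand (a b x : R) : R :=
  if Rlt_dec 0 x then x * log2 (x / (/2 * (a + b))) else 0.

Lemma Fch_term r a b x : -1 < r -> 0 <= a -> 0 <= b -> 0 < a + b -> (x = a \/ x = b) ->
  Fch_summand r a b x = (a + b) * Rpower 2 (- r) * Rpower (powr (a/(a+b)) (/(1+r)) + powr (b/(a+b)) (/(1+r))) r
    * powr (x/(a+b)) (/(1+r)).
Proof.
  intros hr ha hb0 hu hx. unfold Fch_summand. set (s := /(1+r)). set (u := a + b) in *.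
  assert (hx0 : 0 <= x) by (destruct hx; subst; auto).
  destruct (Rlt_dec 0 x) as [h|h].
  2:{ replace x with 0 by lra.
      replace (powr (0/u) s) with 0; [ring|].
      unfold powr. destruct (Rlt_dec 0 (0/u)) as [c|c]; auto. unfold Rdiv in c. lra. }
  rewrite (powr_scale u a s), (powr_scale u b s), (powr_scale u x s) by (auto; lra).
  set (pa := powr (a/u) s). set (pb := powr (b/u) s).
  assert (hpx : powr (x/u) s = Rpower (x/u) s).
  { unfold powr. destruct (Rlt_dec 0 (x/u)) as [_|c]; auto.
    exfalso; apply c; apply Rdiv_lt_0_compat; auto. }
  rewrite hpx. set (al := Rpower (x/u) s).
  assert (hal : 0 < al) by apply Rpower_pos.
  assert (hS : 0 < pa + pb).
  { pose proof (powr_nonneg (a/u) s); pose proof (powr_nonneg (b/u) s).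
    assert (0 < powr (x/u) s) by (rewrite hpx; apply Rpower_pos).
    destruct hx as [e|e]; rewrite e in *; unfold pa, pb; lra. }
  assert (hU : 0 < Rpower u s) by apply Rpower_pos.
  replace (/ 2 * (Rpower u s * pa + Rpower u s * pb) / (Rpower u s * al))
    with ((pa + pb) / (2 * al)) by (field; lra).
  unfold Rpower at 1 2 3.
  rewrite Rcomplements.ln_div, ln_mult by lra.
  replace (ln al) with (s * ln (x / u)) by (symmetry; apply ln_Rpower).
  replace x with (u * exp (ln (x/u))) at 1
    by (rewrite exp_ln by (apply Rdiv_lt_0_compat; lra); field; lra).
  unfold al, Rpower.
  replace (u * exp (ln (x / u)) * exp (r * (ln (pa + pb) - (ln 2 + s * ln (x / u)))))
    with (u * exp (- r * ln 2 + r * ln (pa + pb) + s * ln (x / u))).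
  - rewrite !exp_plus. ring.
  - rewrite Rmult_assoc, <- exp_plus. do 2 f_equal.
    assert (hrs : r * s = 1 - s) by (unfold s; field; lra).
    transitivity (- r * ln 2 + r * ln (pa + pb) + (1 - r * s) * ln (x / u));
      [rewrite hrs|]; ring.
Qed.
Lemma Fch_summands n W r :
  Fch n W r = sumX (fun x => /2 * sumY n (fun y => Fch_summand r (W false y) (W true y) (W x y))).
Proof. reflexivity. Qed.

Lemma capacity_summands n W :
  capacity n W = sumX (fun x => /2 * sumY n (fun y => cap_summand (W false y) (W true y) (W x y))).
Proof. reflexivity. Qed.

Lemma Fch_column r a b : -1 < r -> 0 <= a -> 0 <= b ->
  Fch_summand r a b a + Fch_summand r a b b = (a + b) * Fbsc r (b / (a + b)).
Proof.
  intros hr ha hb0.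
  destruct (Rlt_dec 0 (a + b)) as [hu|hu].
  2:{ unfold Fch_summand. replace a with 0 by lra. replace b with 0 by lra.
      destruct (Rlt_dec 0 0); [lra|]. ring. }
  rewrite (Fch_term r a b a), (Fch_term r a b b) by auto.
  unfold Fbsc. replace (1 - b / (a + b)) with (a / (a + b)) by (field; lra).
  set (S := powr (a / (a + b)) (/ (1 + r)) + powr (b / (a + b)) (/ (1 + r))).
  rewrite (Rplus_comm (powr (b / (a + b)) _)). fold S.
  assert (hS : 0 < S).
  { unfold S. pose proof (powr_nonneg (a / (a + b)) (/ (1 + r))).
    pose proof (powr_nonneg (b / (a + b)) (/ (1 + r))).
    unfold powr in *. destruct (Rlt_dec 0 (a / (a + b))) as [h1|h1].
    - pose proof (Rpower_pos (a / (a + b)) (/ (1 + r))). lra.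
    - destruct (Rlt_dec 0 (b / (a + b))) as [h2|h2].
      + pose proof (Rpower_pos (b / (a + b)) (/ (1 + r))). lra.
      + exfalso. assert (a / (a + b) + b / (a + b) = 1) by (field; lra). lra. }
  replace (1 + r) with (r + 1) at 3 by ring.
  rewrite Rpower_plus, Rpower_1 by auto. unfold S. ring.
Qed.

Lemma cap_term a b x : 0 <= a -> 0 <= b -> 0 < a + b -> 0 <= x ->
  cap_summand a b x =
  x + (a + b) * (if Rlt_dec 0 (x / (a + b)) then x / (a + b) * log2 (x / (a + b)) else 0).
Proof.
  intros ha hb0 hu hx. unfold cap_summand.
  destruct (Rlt_dec 0 x) as [h|h]; destruct (Rlt_dec 0 (x / (a + b))) as [h'|h'].
  - unfold log2. replace (x / (/ 2 * (a + b))) with (2 * (x / (a + b))) by (field; lra).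
    rewrite ln_mult by lra. pose proof ln2_pos. field. lra.
  - exfalso; apply h'; apply Rdiv_lt_0_compat; lra.
  - exfalso. replace x with 0 in h' by lra. unfold Rdiv in h'. lra.
  - replace x with 0 by lra. ring.
Qed.

Lemma cap_column a b : 0 <= a -> 0 <= b ->
  cap_summand a b a + cap_summand a b b = (a + b) * (1 - hb (b / (a + b))).
Proof.
  intros ha hb0.
  destruct (Rlt_dec 0 (a + b)) as [hu|hu].
  - rewrite (cap_term a b a), (cap_term a b b) by auto.
    unfold hb. replace (1 - b / (a + b)) with (a / (a + b)) by (field; lra). ring.
  - unfold cap_summand. replace a with 0 by lra. replace b with 0 by lra.
    destruct (Rlt_dec 0 0); [lra|]. ring.
Qed.

Lemma in_seq0 n y : In y (seq 0 n) -> (y < n)%nat.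
Proof. intros h. apply in_seq in h. lia. Qed.

Lemma sum_by_columns n W (T : R -> R -> R -> R) (G : nat -> R) :
  (forall y, (y < n)%nat ->
     T (W false y) (W true y) (W false y) + T (W false y) (W true y) (W true y)
     = (W false y + W true y) * G y) ->
  sumX (fun x => /2 * sumY n (fun y => T (W false y) (W true y) (W x y)))
  = ssum (seq 0 n) (fun y => PY W y * G y).
Proof.
  intros H. unfold sumX at 1. unfold sumY.
  fold (ssum (seq 0 n) (fun y => T (W false y) (W true y) (W false y))).
  fold (ssum (seq 0 n) (fun y => T (W false y) (W true y) (W true y))).
  rewrite <- !ssum_scal, <- ssum_plus. apply ssum_ext. intros y hy.
  unfold PY, sumX. rewrite Rmult_assoc, <- H by (apply in_seq0; auto). ring.
Qed.

Lemma Fch_decomp n W r : -1 < r -> is_channel n W ->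
  Fch n W r = ssum (seq 0 n) (fun y => PY W y * Fbsc r (crossover W y)).
Proof.
  intros hr [hnn _]. rewrite Fch_summands. apply sum_by_columns.
  intros y hy. apply Fch_column; auto.
Qed.

Lemma capacity_decomp n W : is_channel n W ->
  capacity n W = ssum (seq 0 n) (fun y => PY W y * (1 - hb (crossover W y))).
Proof.
  intros [hnn _]. rewrite capacity_summands. apply sum_by_columns.
  intros y hy. apply cap_column; auto.
Qed.

(** A crossover probability lies in [0,1] (degenerate columns give 0). *)
Lemma crossover_range W y : 0 <= W false y -> 0 <= W true y -> 0 <= crossover W y <= 1.
Proof.
  intros ha hb0. unfold crossover.
  destruct (Req_dec (W false y + W true y) 0) as [e|e].
  - replace (W true y) with 0 by lra. unfold Rdiv. lra.
  - split; [apply Rmult_le_pos; [lra|left; apply Rinv_0_lt_compat; lra]|].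
    apply Rmult_le_reg_r with (W false y + W true y); [lra|].
    unfold Rdiv. rewrite Rmult_assoc, Rinv_l by lra. lra.
Qed.

(** The crossover folded into [0,1/2]; F^bsc and h are symmetric under d -> 1-d. *)
Definition folded (d : R) : R := Rmin d (1 - d).

Lemma folded_range d : 0 <= d <= 1 -> 0 <= folded d <= /2.
Proof. intros hd. unfold folded, Rmin. destruct (Rle_dec d (1 - d)); lra. Qed.

Lemma Fbsc_folded r d : Fbsc r (folded d) = Fbsc r d.
Proof. unfold folded, Rmin. destruct (Rle_dec d (1 - d)); auto. apply Fbsc_sym. Qed.

Lemma hb_folded d : hb (folded d) = hb d.
Proof. unfold folded, Rmin. destruct (Rle_dec d (1 - d)); auto. apply hb_sym. Qed.

Lemma F_between_bec_bsc n W eps r : is_channel n W -> 0 <= eps <= /2 ->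
  hb eps = 1 - capacity n W -> -1 < r ->
  0 < Fbec r (capacity n W) /\ Fbec r (capacity n W) <= Fch n W r /\ Fch n W r <= Fbsc r eps.
Proof.
  intros hch he hh hr. pose proof hch as [hnn hsum].
  set (l := seq 0 n). set (d := fun y => folded (crossover W y)).
  assert (hp : forall y, In y l -> 0 <= PY W y).
  { intros y hy. apply in_seq0 in hy. unfold PY, sumX.
    pose proof (hnn false y hy). pose proof (hnn true y hy). lra. }
  assert (hs : ssum l (PY W) = 1).
  { unfold l, PY, sumX. rewrite ssum_scal, ssum_plus.
    change (/ 2 * (sumY n (W false) + sumY n (W true)) = 1). rewrite !hsum. field. }
  assert (hd : forall y, In y l -> 0 <= d y <= /2).
  { intros y hy. apply in_seq0 in hy. apply folded_range, crossover_range; auto. }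
  assert (hcap : capacity n W = ssum l (fun y => PY W y * (1 - hb (d y)))).
  { rewrite capacity_decomp by auto. apply ssum_ext. intros y _. unfold d. now rewrite hb_folded. }
  assert (hF : Fch n W r = ssum l (fun y => PY W y * Fbsc r (d y))).
  { rewrite Fch_decomp by auto. apply ssum_ext. intros y _. unfold d. now rewrite Fbsc_folded. }
  assert (hH : hb eps = ssum l (fun y => PY W y * hb (d y))).
  { rewrite hh, hcap.
    rewrite (ssum_ext l _ (fun y => PY W y + (-1) * (PY W y * hb (d y)))) by (intros; ring).
    rewrite ssum_plus, ssum_scal, hs. ring. }
  assert (hC : 0 <= capacity n W <= 1).
  { rewrite hcap. split.
    - apply ssum_nonneg. intros y hy. pose proof (hb_range (d y) (hd y hy)).
      apply Rmult_le_pos; auto. lra.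
    - rewrite <- hs. apply ssum_le. intros y hy.
      pose proof (hb_range (d y) (hd y hy)). pose proof (hp y hy). nra. }
  split; [|split].
  - unfold Fbec. pose proof (Rpower_pos 2 (- r)). nra.
  - rewrite hcap, hF. apply average_Fbsc_ge_Fbec; auto.
  - rewrite hF. apply average_Fbsc_le_Fbsc; auto.
Qed.

Lemma log2_le x y : 0 < x -> x <= y -> log2 x <= log2 y.
Proof.
  intros hx hxy. unfold log2. apply Rmult_le_compat_r.
  - left; apply Rinv_0_lt_compat, ln2_pos.
  - apply Rcomplements.ln_le; auto.
Qed.

Lemma E0_between_bsc_bec n W eps r : is_channel n W -> 0 <= eps <= /2 ->
  hb eps = 1 - capacity n W -> -1 < r ->
  E0bsc eps r <= E0ch n W r /\ E0ch n W r <= E0bec (capacity n W) r.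
Proof.
  intros hch he hh hr. destruct (F_between_bec_bsc n W eps r hch he hh hr) as [h0 [h1 h2]].
  unfold E0bsc, E0ch, E0bec. split; apply Ropp_le_contravar, log2_le; lra.
Qed.

Lemma Rbar_sup_mono (P Q : R -> Prop) : (exists x, P x) ->
  (forall v, P v -> exists v', Q v' /\ v <= v') -> Rbar_le (Rbar_sup P) (Rbar_sup Q).
Proof.
  intros hne hPQ. unfold Rbar_sup.
  destruct (excluded_middle_informative (exists x, Q x)) as [neQ|nQ].
  2:{ exfalso. destruct hne as [x hx]. destruct (hPQ x hx) as [v [hv _]]. apply nQ; eauto. }
  destruct (excluded_middle_informative (exists x, P x)) as [neP|nP]; [|exact I].
  destruct (excluded_middle_informative (bound Q)) as [bQ|nbQ].
  2:{ destruct (excluded_middle_informative (bound P)); exact I. }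
  destruct (excluded_middle_informative (bound P)) as [bP|nbP].
  - destruct (completeness P bP neP) as [sP [ubP lubP]].
    destruct (completeness Q bQ neQ) as [sQ [ubQ lubQ]]. simpl.
    apply lubP. intros v hv. destruct (hPQ v hv) as [v' [hv' hle]].
    apply Rle_trans with v'; auto.
  - exfalso. apply nbP. destruct bQ as [m hm]. exists m. intros v hv.
    destruct (hPQ v hv) as [v' [hv' hle]]. apply Rle_trans with v'; auto.
Qed.

Lemma Esc_mono (E E' : R -> R) Rt : (forall r, -1 < r <= 0 -> E r <= E' r) ->
  Rbar_le (Esc E Rt) (Esc E' Rt).
Proof.
  intros H. apply Rbar_sup_mono.
  - exists (E 0 - 0 * Rt). exists 0. split; [lra|reflexivity].
  - intros v [r [hr ->]]. exists (E' r - r * Rt). split; [exists r; auto|].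
    pose proof (H r hr). lra.
Qed.

Lemma Esp_mono (E E' : R -> R) Rt : (forall r, 0 < r -> E r <= E' r) ->
  Rbar_le (Esp E Rt) (Esp E' Rt).
Proof.
  intros H. apply Rbar_sup_mono.
  - exists (E 1 - 1 * Rt). exists 1. split; [lra|reflexivity].
  - intros v [r [hr ->]]. exists (E' r - r * Rt). split; [exists r; auto|].
    pose proof (H r hr). lra.
Qed.

Lemma Egfb_mono (E E' : R -> R) Rt : (forall r, 0 <= r -> E r <= E' r) ->
  Rbar_le (Egfb E Rt) (Egfb E' Rt).
Proof.
  intros H. apply Rbar_sup_mono.
  - exists ((E 0 - 0 * Rt) / (1 + 0)). exists 0. split; [lra|reflexivity].
  - intros v [r [hr ->]]. exists ((E' r - r * Rt) / (1 + r)). split; [exists r; auto|].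
    pose proof (H r hr). apply Rmult_le_compat_r; [left; apply Rinv_0_lt_compat|]; lra.
Qed.

Theorem mainTheorem10 :
  forall (n : nat) (W : bool -> nat -> R),
    BIMS n W ->
    forall (eps : R), 0 <= eps <= / 2 -> hb eps = 1 - capacity n W ->
    forall (Rt : R), 0 <= Rt ->
      (Rbar_le (Esc (E0bsc eps) Rt) (Esc (E0ch n W) Rt) /\
       Rbar_le (Esc (E0ch n W) Rt) (Esc (E0bec (capacity n W)) Rt)) /\
      (Rbar_le (Esp (E0bsc eps) Rt) (Esp (E0ch n W) Rt) /\
       Rbar_le (Esp (E0ch n W) Rt) (Esp (E0bec (capacity n W)) Rt)) /\
      (Rbar_le (Egfb (E0bsc eps) Rt) (Egfb (E0ch n W) Rt) /\
       Rbar_le (Egfb (E0ch n W) Rt) (Egfb (E0bec (capacity n W)) Rt)).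
Proof.
  intros n W [hch _] eps he hh Rt _.
  assert (lower : forall r, -1 < r -> E0bsc eps r <= E0ch n W r)
    by (intros r hr; apply (E0_between_bsc_bec n W eps r hch he hh hr)).
  assert (upper : forall r, -1 < r -> E0ch n W r <= E0bec (capacity n W) r)
    by (intros r hr; apply (E0_between_bsc_bec n W eps r hch he hh hr)).
  repeat split.
  - apply Esc_mono. intros r hr. apply lower; lra.
  - apply Esc_mono. intros r hr. apply upper; lra.
  - apply Esp_mono. intros r hr. apply lower; lra.
  - apply Esp_mono. intros r hr. apply upper; lra.
  - apply Egfb_mono. intros r hr. apply lower; lra.
  - apply Egfb_mono. intros r hr. apply upper; lra.
Qed.
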